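(* (1) If $\mathsf{A}_0,\dots,\mathsf{A}_{n-1}$ and $\mathsf{B}\neq\mathsf{0}$ are in $\mathbb{S}$ and $j<n$ is such that $\mathsf{A}_i\le\mathsf{A}_j$ for all $i<n$, then $\big(\sum_{i<n}\mathsf{A}_i\big)*\exp(\mathsf{B})\equiv\mathsf{A}_j*\exp(\mathsf{B})$. (2) If $\mathsf{A}\in\mathbb{S}$, then for every natural number $m$, $\exp(\mathsf{A})\cdot m\le\exp(\mathsf{A}+\mathsf{1})$.
   Context: Standard generating sets: $\mathrm{Homeo}_+(I)$ acts on $I=[0,1]$ on the right. Support $\mathrm{supt}(f)=\{t:tf\ne t\}$; extended support = interior of its closure; orbitals = components of the support, endpoints = transition points; a bump has exactly one orbital, positive if $tf>t$ there, else negative. A marking assigns to each bump $b$ with support $(u,v)$ a point $s_b\in(u,v)$; feet of $b$: $(u,s_b)$ and $[t_b,v)$ with $t_b=s_bb$ ($b$ positive) or $s_bb^{-1}$ ($b$ negative). A marked function has finitely many bumps, each marked. A finite set of marked functions is fast if no bump occurs in two of its elements and distinct bumps have disjoint feet. A standard function is a marked function whose extended support is an interval, with all positive bumps right of all negative bumps, and #positive $-$ #negative bumps $\in\{0,1\}$. For standard $f,g$: $f\ll g$ iff extended supports disjoint with $f$'s to the left; $f\sqsubset g$ iff closure of extended support of $f$ lies in extended support of $g$; $f<g$ iff $f\ll g$ or $f\sqsubset g$. $f^\circ$: if $f$ has $>2$ orbitals, $f$ restricted to the union of its non-extreme orbitals; if $f$ has 1 or 2 orbitals and the left foot of its positive bump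 is $(r,s)$, a positive bump with support $(r,s)$. $(f,g)$ is a standard pair if $\{f,g\}$ is fast and either $f\ll g$ or ($f\sqsubset g$ and $(g^\circ,f)$ is a standard pair). $\mathcal{S}$ = finite sets of standard functions, pairwise $<$-comparable, each pair $f<g$ a standard pair. Oscillation $o(f,g)$ for $f<g$: number of orbitals of $g$ containing a transition point of $f$. Signatures: the signature of $A\in\mathcal S$ is $(f,g)\mapsto o(f,g)$ on pairs $f<g$ of $A$; functions on pairs of finite linear orders are equivalent if an order-preserving bijection of bases carries one to the other; $\mathbb{S}$ is the set of signatures of members of $\mathcal S$ up to equivalence. $\mathsf{0},\mathsf{1}$: base sizes $0,1$. $\mathsf{A}+\mathsf{B}$: base $A$ followed by $B$, agreeing with $\mathsf{A},\mathsf{B}$ on their bases, value $0$ across; $\sum_{i<n}$ is iterated sum left to right and $\mathsf{A}\cdot m=\sum_{i<m}\mathsf{A}$. $\exp(\mathsf{A})$: same base, values $\mathsf{A}(i,j)+1$. $\mathsf{A}*\exp(\mathsf{B})$: base $A$ followed by $B$, agreeing with $\mathsf{A}$ on $A$, with $\exp(\mathsf{B})$ on $B$, value $1$ across (these operations stay in $\mathbb{S}$). Inflation: for $\mathsf{A}$ with base $A$ and $m\in A$, $\mathsf{A}^m$ has base $A\cup\{i^m:i\in A,\ i<m,\ \mathsf{A}(i,m)>0\}$ (new symbols), the new elements placed above all elements of $A$ below $m$ and below $m$, with $i^m<j^m$ iff $i<j$; it extends $\mathsf{A}$ by, for $i,j<m\le k$ (with $\mathsf{A}(m,m)=\infty$):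 $\mathsf{A}^m(i^m,j^m)=\mathsf{A}(i,j)$, $\mathsf{A}^m(i,j^m)=\min(\mathsf{A}(j,m)-1,\mathsf{A}(i,m))$, $\mathsf{A}^m(i^m,k)=\min(\mathsf{A}(i,m),\mathsf{A}(m,k))$. $\mathsf{A}\le\mathsf{B}$ iff there is a sequence $\mathsf{B}_0=\mathsf{B},\dots,\mathsf{B}_n=\mathsf{A}$ with each $\mathsf{B}_{i+1}$ (equivalent to) a restriction to a subset of the base of an inflation of $\mathsf{B}_i$; $\mathsf{A}\equiv\mathsf{B}$ iff $\mathsf{A}\le\mathsf{B}\le\mathsf{A}$. *)

From Stdlib Require Import Reals Lra Lia List Arith ClassicalDescription.
Open Scope R_scope.

Definition inI (t : R) : Prop := 0 <= t <= 1.

(* Homeo_+(I): orientation-preserving homeomorphisms of [0,1]; the action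
   is on the right, t f is written (f t).  Values outside [0,1] are ignored. *)
Definition homeo (f : R -> R) : Prop :=
  (forall t, inI t -> inI (f t)) /\
  (forall s t, inI s -> inI t -> s < t -> f s < f t) /\
  (forall y, inI y -> exists t, inI t /\ f t = y).

Definition support (f : R -> R) (t : R) : Prop := inI t /\ f t <> t.

Definition cl (S : R -> Prop) (x : R) : Prop :=
  forall e, 0 < e -> exists y, S y /\ Rabs (y - x) < e.
Definition intr (S : R -> Prop) (x : R) : Prop :=
  exists e, 0 < e /\ forall y, Rabs (y - x) < e -> S y.
Definition is_interval (S : R -> Prop) : Prop :=
  forall x y z, S x -> S z -> x <= y <= z -> S y.

(* A marked function: the homeomorphism mf, its nb orbitals listed from
   left to right, orbital k being the open interval (bu k, bv k), with
   marking point bs k. *)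
Record marked := MkM {
  mf : R -> R;
  nb : nat;
  bu : nat -> R;
  bs : nat -> R;
  bv : nat -> R }.

Definition in_orb (M : marked) (k : nat) (t : R) : Prop :=
  bu M k < t < bv M k.

(* The data are a genuine marked function: the listed intervals are
   pairwise disjoint open intervals (ordered left to right) whose union is
   the support of mf, i.e. they are exactly the orbitals (components of the
   support), finitely many, each with a marking point in it. *)
Definition is_marked (M : marked) : Prop :=
  homeo (mf M) /\
  (forall k, (k < nb M)%nat -> 0 <= bu M k < bs M k /\ bs M k < bv M k <= 1) /\
  (forall k, (S k < nb M)%nat -> bv M k <= bu M (S k)) /\
  (forall t, support (mf M) t <-> exists k, (k < nb M)%nat /\ in_orb M k t).

Definition pos (M : marked) (k : nat) : Prop :=
  forall t, in_orb M k t -> t < mf M t.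

Definition bumpf (M : marked) (k : nat) (t : R) : R :=
  if Rlt_dec (bu M k) t then (if Rlt_dec t (bv M k) then mf M t else t) else t.

(* t_b = s_b b (positive) or s_b b^{-1} (negative) *)
Definition tb (M : marked) (k : nat) (t : R) : Prop :=
  (pos M k /\ t = mf M (bs M k)) \/
  (~ pos M k /\ inI t /\ mf M t = bs M k).

Definition in_foot (M : marked) (k : nat) (x : R) : Prop :=
  (bu M k < x < bs M k) \/ (exists t, tb M k t /\ t <= x < bv M k).

Definition fast2 (f g : marked) : Prop :=
  (~ exists k l, (k < nb f)%nat /\ (l < nb g)%nat /\
        forall t, inI t -> bumpf f k t = bumpf g l t) /\
  (forall k l, (k < nb f)%nat -> (l < nb f)%nat -> k <> l ->
        forall x, ~ (in_foot f k x /\ in_foot f l x)) /\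
  (forall k l, (k < nb g)%nat -> (l < nb g)%nat -> k <> l ->
        forall x, ~ (in_foot g k x /\ in_foot g l x)) /\
  (forall k l, (k < nb f)%nat -> (l < nb g)%nat ->
        forall x, ~ (in_foot f k x /\ in_foot g l x)).

Fixpoint cnt (P : nat -> Prop) (n : nat) : nat :=
  match n with
  | O => O
  | S n' => (cnt P n' + (if excluded_middle_informative (P n') then 1 else 0))%nat
  end.

Definition esupp (M : marked) : R -> Prop := intr (cl (support (mf M))).

Definition standard (M : marked) : Prop :=
  is_marked M /\
  (exists x, esupp M x) /\ is_interval (esupp M) /\
  (forall k l, (k < nb M)%nat -> (l < nb M)%nat -> ~ pos M k -> pos M l ->
        bv M k <= bu M l) /\
  (cnt (pos M) (nb M) = cnt (fun k => ~ pos M k) (nb M) \/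
   cnt (pos M) (nb M) = S (cnt (fun k => ~ pos M k) (nb M))).

Definition ll (f g : marked) : Prop :=
  (forall x, ~ (esupp f x /\ esupp g x)) /\
  (forall x y, esupp f x -> esupp g y -> x < y).
Definition sq (f g : marked) : Prop :=
  forall x, cl (esupp f) x -> esupp g x.
Definition slt (f g : marked) : Prop := ll f g \/ sq f g.

Definition circ (g h : marked) : Prop :=
  ((2 < nb g)%nat /\ is_marked h /\ nb h = (nb g - 2)%nat /\
   (forall k, (k < nb h)%nat ->
      bu h k = bu g (S k) /\ bs h k = bs g (S k) /\ bv h k = bv g (S k)) /\
   (forall t, inI t ->
      ((exists k, (k < nb h)%nat /\ in_orb h k t) -> mf h t = mf g t) /\
      (~ (exists k, (k < nb h)%nat /\ in_orb h k t) -> mf h t = t)))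
  \/
  ((1 <= nb g <= 2)%nat /\
   exists k, (k < nb g)%nat /\ pos g k /\
     is_marked h /\ nb h = 1%nat /\ bu h 0%nat = bu g k /\ bv h 0%nat = bs g k /\
     pos h 0%nat).

Inductive std_pair : marked -> marked -> Prop :=
| SP_ll f g : fast2 f g -> ll f g -> std_pair f g
| SP_sq f g h : fast2 f g -> sq f g -> circ g h -> std_pair h f -> std_pair f g.

Definition osc (f g : marked) : nat :=
  cnt (fun l => exists k, (k < nb f)%nat /\
         (in_orb g l (bu f k) \/ in_orb g l (bv f k))) (nb g).

(* A signature: base {0,...,sz-1} with its usual order; sval i j is the
   value on the pair i < j (values for other pairs are irrelevant). *)
Record sig := MkSig { sz : nat; sval : nat -> nat -> nat }.

Open Scope nat_scope.

Definition sig_eqv (A B : sig) : Prop :=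
  sz A = sz B /\ forall i j, i < j < sz A -> sval A i j = sval B i j.

(* membership in S (the signatures of members of the family S), up to
   equivalence: the members f_0 < f_1 < ... of a set in S listed in order *)
Definition in_SS (A : sig) : Prop :=
  exists F : nat -> marked,
    (forall i, i < sz A -> standard (F i)) /\
    (forall i j, i < j < sz A ->
        slt (F i) (F j) /\ std_pair (F i) (F j) /\ sval A i j = osc (F i) (F j)).

Definition sig0 : sig := MkSig 0 (fun _ _ => 0).
Definition sig1 : sig := MkSig 1 (fun _ _ => 0).

Definition sig_sum (A B : sig) : sig :=
  MkSig (sz A + sz B) (fun i j =>
    if j <? sz A then sval A i j
    else if sz A <=? i then sval B (i - sz A) (j - sz A)
    else 0).

Definition sig_exp (A : sig) : sig := MkSig (sz A) (fun i j => S (sval A i j)).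

Definition sig_star_exp (A B : sig) : sig :=
  MkSig (sz A + sz B) (fun i j =>
    if j <? sz A then sval A i j
    else if sz A <=? i then S (sval B (i - sz A) (j - sz A))
    else 1).

Fixpoint sig_bsum (A : nat -> sig) (n : nat) : sig :=
  match n with
  | O => sig0
  | S n' => sig_sum (sig_bsum A n') (A n')
  end.

Definition sig_mul (A : sig) (m : nat) : sig := sig_bsum (fun _ => A) m.

(* inflation A^m.  New elements i^m (i < m, A(i,m) > 0), listed increasingly,
   are placed at positions m, m+1, ..., m+p-1; old elements k >= m shift to
   k + p. *)
Definition infl_new (A : sig) (m : nat) : list nat :=
  filter (fun i => 0 <? sval A i m) (seq 0 m).

Definition infl (A : sig) (m : nat) : sig :=
  let P := infl_new A m in
  let p := length P in
  let cls y := if y <? m then (false, y)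
               else if y <? m + p then (true, nth (y - m) P 0)
               else (false, y - p) in
  MkSig (sz A + p) (fun x y =>
    match cls x, cls y with
    | (false, a), (false, b) => sval A a b
    | (true, a), (true, b) => sval A a b
    | (false, a), (true, b) => Nat.min (sval A b m - 1) (sval A a m)
    | (true, a), (false, k) =>
        if k =? m then sval A a m (* A(m,m) = infinity *)
        else Nat.min (sval A a m) (sval A m k)
    end).

Definition embeds (A' A : sig) : Prop :=
  exists f : nat -> nat,
    (forall i j, i < j < sz A' -> f i < f j) /\
    (forall i, i < sz A' -> f i < sz A) /\
    (forall i j, i < j < sz A' -> sval A' i j = sval A (f i) (f j)).

Definition sig_step (C B : sig) : Prop :=
  exists m, m < sz B /\ embeds C (infl B m).

Inductive sig_le : sig -> sig -> Prop :=
| sig_le_refl A B : sig_eqv A B -> sig_le A B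
| sig_le_step A C B : sig_step C B -> sig_le A C -> sig_le A B.

Definition sig_equiv (A B : sig) : Prop := sig_le A B /\ sig_le B A.

(* Inflating (P + Z + Q) * exp(B) at a point m of Z copies only points of Z
   (the points of P see Z with value 0), and the result is
   (P + Z^m + Q) * exp(B).  Hence <= is a congruence for such contexts, and
   every summand A_i of the sum may be replaced by A_j, giving (A_j . n) * exp(B).
   Inflating Z * exp(B) at the first point of B copies all of Z (every point of
   Z sees B with value 1), which yields (Z + Z) * exp(B); so by restriction
   (A_j . k) * exp(B) <= A_j * exp(B) for k >= 1.  The reverse inequality is the
   restriction to the block A_j of the sum, and (2) follows from the same bound
   applied to exp(A) and B = 1, since exp(A + 1) = exp(A) * exp(1). *)

From Stdlib Require Import Reals Lra Lia List Arith.
Open Scope nat_scope.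

Ltac nat_cases := repeat match goal with
  | |- context [?a <? ?b] => destruct (Nat.ltb_spec a b)
  | |- context [?a <=? ?b] => destruct (Nat.leb_spec a b)
  | |- context [?a =? ?b] => destruct (Nat.eqb_spec a b)
  | H : context [?a <? ?b] |- _ => destruct (Nat.ltb_spec a b)
  | H : context [?a <=? ?b] |- _ => destruct (Nat.leb_spec a b)
  end; try lia.

Ltac norm_idx := repeat match goal with
  | |- context [?x + ?y - ?x] => replace (x + y - x) with y by lia
  end.

Ltac sval_congr := repeat match goal with
  | |- S _ = S _ => f_equal
  | |- sval ?A _ _ = sval ?A _ _ => f_equal
  end; lia.

Lemma sig_eqv_refl A : sig_eqv A A.
Proof. split; auto. Qed.

Lemma sig_eqv_sym A B : sig_eqv A B -> sig_eqv B A.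
Proof. intros [Hsz Hv]; split; auto; intros; symmetry; apply Hv; lia. Qed.

Lemma sig_eqv_trans A B C : sig_eqv A B -> sig_eqv B C -> sig_eqv A C.
Proof. intros [H1 H2] [H3 H4]; split; [lia|]; intros; rewrite H2, H4; auto; lia. Qed.

Lemma sig_sum_eqv A A' B B' :
  sig_eqv A A' -> sig_eqv B B' -> sig_eqv (sig_sum A B) (sig_sum A' B').
Proof.
  intros [H1 H2] [H3 H4]; split; simpl; [lia|].
  intros i j Hij; rewrite <- H1; nat_cases; [apply H2 | apply H4]; lia.
Qed.

Lemma sig_star_exp_eqv A A' B B' :
  sig_eqv A A' -> sig_eqv B B' -> sig_eqv (sig_star_exp A B) (sig_star_exp A' B').
Proof.
  intros [H1 H2] [H3 H4]; split; simpl; [lia|].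
  intros i j Hij; rewrite <- H1; nat_cases; [apply H2 | f_equal; apply H4]; lia.
Qed.

Lemma sig_sum0l A : sig_eqv (sig_sum sig0 A) A.
Proof. split; simpl; [lia|]; intros; nat_cases; f_equal; lia. Qed.

Lemma sig_sum0r A : sig_eqv (sig_sum A sig0) A.
Proof. split; simpl; [lia|]; intros; nat_cases. Qed.

Lemma sig_sumA A B C : sig_eqv (sig_sum (sig_sum A B) C) (sig_sum A (sig_sum B C)).
Proof. split; simpl; [lia|]; intros; nat_cases; f_equal; lia. Qed.

Lemma sig_exp_sum1 A : sig_eqv (sig_exp (sig_sum A sig1)) (sig_star_exp (sig_exp A) sig1).
Proof. split; simpl; [lia|]; intros; nat_cases. Qed.

Lemma embeds_of_eqv A B : sig_eqv A B -> embeds A B.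
Proof. intros [Hsz Hv]; exists (fun i => i); repeat split; auto; lia. Qed.

Lemma embeds_refl A : embeds A A.
Proof. apply embeds_of_eqv, sig_eqv_refl. Qed.

Lemma embeds_trans A B C : embeds A B -> embeds B C -> embeds A C.
Proof.
  intros [f [Hf1 [Hf2 Hf3]]] [g [Hg1 [Hg2 Hg3]]].
  assert (Hf : forall i j, i < j < sz A -> f i < f j < sz B).
  { intros i j Hij; split; [apply Hf1 | apply Hf2]; lia. }
  exists (fun i => g (f i)); repeat split; intros.
  - apply Hg1, Hf; auto.
  - apply Hg2, Hf2; auto.
  - rewrite Hf3, Hg3 by auto; reflexivity.
Qed.

Lemma sig0_embeds A : embeds sig0 A.
Proof. exists (fun i => i); repeat split; simpl; lia. Qed.

Lemma concat_map_embedding (a a' b b' : nat) (f g : nat -> nat) :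
  (forall i j, i < j < a -> f i < f j) -> (forall i, i < a -> f i < a') ->
  (forall i j, i < j < b -> g i < g j) -> (forall i, i < b -> g i < b') ->
  let h i := if i <? a then f i else a' + g (i - a) in
  (forall i j, i < j < a + b -> h i < h j) /\ (forall i, i < a + b -> h i < a' + b').
Proof.
  intros Hf1 Hf2 Hg1 Hg2 h; unfold h; split.
  - intros i j Hij; nat_cases.
    + apply Hf1; lia.
    + specialize (Hf2 i ltac:(lia)); lia.
    + specialize (Hg1 (i - a) (j - a) ltac:(lia)); lia.
  - intros i Hi; nat_cases.
    + specialize (Hf2 i ltac:(lia)); lia.
    + specialize (Hg2 (i - a) ltac:(lia)); lia.
Qed.

Lemma embeds_sum A A' B B' :
  embeds A A' -> embeds B B' -> embeds (sig_sum A B) (sig_sum A' B').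
Proof.
  intros [f [Hf1 [Hf2 Hf3]]] [g [Hg1 [Hg2 Hg3]]].
  destruct (concat_map_embedding _ _ _ _ _ _ Hf1 Hf2 Hg1 Hg2) as [Hh1 Hh2].
  exists (fun i => if i <? sz A then f i else sz A' + g (i - sz A)).
  split; [exact Hh1 | split; [exact Hh2|]]; simpl.
  intros i j Hij.
  destruct (Nat.ltb_spec i (sz A)); destruct (Nat.ltb_spec j (sz A)); try lia.
  - pose proof (Hf2 i ltac:(lia)); pose proof (Hf2 j ltac:(lia)).
    nat_cases; apply Hf3; lia.
  - pose proof (Hf2 i ltac:(lia)); nat_cases.
  - nat_cases; rewrite Hg3 by lia; sval_congr.
Qed.

Lemma embeds_star_exp A A' B B' :
  embeds A A' -> embeds B B' -> embeds (sig_star_exp A B) (sig_star_exp A' B').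
Proof.
  intros [f [Hf1 [Hf2 Hf3]]] [g [Hg1 [Hg2 Hg3]]].
  destruct (concat_map_embedding _ _ _ _ _ _ Hf1 Hf2 Hg1 Hg2) as [Hh1 Hh2].
  exists (fun i => if i <? sz A then f i else sz A' + g (i - sz A)).
  split; [exact Hh1 | split; [exact Hh2|]]; simpl.
  intros i j Hij.
  destruct (Nat.ltb_spec i (sz A)); destruct (Nat.ltb_spec j (sz A)); try lia.
  - pose proof (Hf2 i ltac:(lia)); pose proof (Hf2 j ltac:(lia)).
    nat_cases; apply Hf3; lia.
  - pose proof (Hf2 i ltac:(lia)); nat_cases.
  - nat_cases; rewrite Hg3 by lia; sval_congr.
Qed.

Lemma embeds_suml A B : embeds A (sig_sum A B).
Proof.
  apply (embeds_trans _ (sig_sum A sig0)).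
  - apply embeds_of_eqv, sig_eqv_sym, sig_sum0r.
  - apply embeds_sum; [apply embeds_refl | apply sig0_embeds].
Qed.

Lemma embeds_sumr A B : embeds B (sig_sum A B).
Proof.
  apply (embeds_trans _ (sig_sum sig0 B)).
  - apply embeds_of_eqv, sig_eqv_sym, sig_sum0l.
  - apply embeds_sum; [apply sig0_embeds | apply embeds_refl].
Qed.

Lemma embeds_star_expl A B : embeds A (sig_star_exp A B).
Proof. exists (fun i => i); repeat split; simpl; intros; nat_cases. Qed.

Lemma embeds_bsum (A : nat -> sig) n j : j < n -> embeds (A j) (sig_bsum A n).
Proof.
  induction n as [|n IH]; intros Hj; [lia|]; simpl.
  destruct (Nat.eq_dec j n) as [->|Hjn].
  - apply embeds_sumr.
  - apply (embeds_trans _ _ _ (IH ltac:(lia))), embeds_suml.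
Qed.

Lemma infl_sz A m : sz (infl A m) = sz A + length (infl_new A m).
Proof. reflexivity. Qed.

Lemma infl0_eqv A : sig_eqv (infl A 0) A.
Proof.
  split; [simpl; lia|]; intros i j _.
  unfold infl; simpl; rewrite !Nat.sub_0_r; reflexivity.
Qed.

Lemma embeds_step C G : embeds C G -> 0 < sz G -> sig_step C G.
Proof.
  intros HCG HG; exists 0; split; auto.
  apply (embeds_trans _ _ _ HCG), embeds_of_eqv, sig_eqv_sym, infl0_eqv.
Qed.

Lemma sig_step_le C G : sig_step C G -> sig_le C G.
Proof. intros H; apply (sig_le_step _ _ _ H), sig_le_refl, sig_eqv_refl. Qed.

Lemma sig_le_eqv_r A C B : sig_le A C -> sig_eqv C B -> sig_le A B.
Proof.
  intros HAC HCB; destruct (Nat.eq_dec (sz B) 0) as [HB|HB].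
  - destruct HAC as [A C HAC|A D C [m [Hm _]] _]; [|destruct HCB; lia].
    apply sig_le_refl, (sig_eqv_trans _ _ _ HAC HCB).
  - apply (sig_le_step _ C); [|exact HAC].
    apply embeds_step; [apply embeds_of_eqv, HCB | lia].
Qed.

Lemma sig_le_trans A B C : sig_le A B -> sig_le B C -> sig_le A C.
Proof.
  intros HAB HBC; revert A HAB.
  induction HBC as [B C HBC|B D C HDC HBD IH]; intros A HAB.
  - apply (sig_le_eqv_r _ _ _ HAB HBC).
  - apply (sig_le_step _ _ _ HDC), IH, HAB.
Qed.

Lemma sig_le_eqv_l A C B : sig_eqv A C -> sig_le C B -> sig_le A B.
Proof. intros HAC; apply sig_le_trans, sig_le_refl, HAC. Qed.

Lemma embeds_le C G : embeds C G -> sig_le C G.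
Proof.
  intros HCG; destruct (Nat.eq_dec (sz G) 0) as [HG|HG].
  - assert (HC : sz C = 0).
    { destruct HCG as [f [_ [Hf _]]]; destruct (Nat.eq_dec (sz C) 0); [auto|].
      specialize (Hf 0 ltac:(lia)); lia. }
    apply sig_le_refl; split; [lia | intros; lia].
  - apply sig_step_le, embeds_step; auto; lia.
Qed.

(* The classifier let-bound inside [infl]: position [y] of [infl A m] holds
   either an old element [(false, i)] or the copy [(true, i)] of [i^m]. *)
Definition infl_cls (A : sig) (m y : nat) : bool * nat :=
  let P := infl_new A m in
  if y <? m then (false, y)
  else if y <? m + length P then (true, nth (y - m) P 0)
  else (false, y - length P).

Definition infl_val (A : sig) (m : nat) (cx cy : bool * nat) : nat :=
  match cx, cy with
  | (false, a), (false, b) => sval A a b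
  | (true, a), (true, b) => sval A a b
  | (false, a), (true, b) => Nat.min (sval A b m - 1) (sval A a m)
  | (true, a), (false, k) =>
      if k =? m then sval A a m else Nat.min (sval A a m) (sval A m k)
  end.

Lemma sval_infl A m x y :
  sval (infl A m) x y = infl_val A m (infl_cls A m x) (infl_cls A m y).
Proof. reflexivity. Qed.

Variant infl_cls_spec (A : sig) (m y : nat) : bool * nat -> Prop :=
  | InflOldBelow : y < m -> infl_cls_spec A m y (false, y)
  | InflNew a : m <= y < m + length (infl_new A m) ->
      a = nth (y - m) (infl_new A m) 0 -> a < m -> 0 < sval A a m ->
      infl_cls_spec A m y (true, a)
  | InflOldAbove : m + length (infl_new A m) <= y ->
      infl_cls_spec A m y (false, y - length (infl_new A m)).

Lemma infl_clsP A m y : infl_cls_spec A m y (infl_cls A m y).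
Proof.
  unfold infl_cls; nat_cases; [constructor; lia | | constructor; lia].
  assert (Hin : In (nth (y - m) (infl_new A m) 0) (infl_new A m)) by (apply nth_In; lia).
  unfold infl_new at 2 in Hin; apply filter_In in Hin as [Hseq Hpos].
  apply in_seq in Hseq; apply Nat.ltb_lt in Hpos.
  apply InflNew; auto; lia.
Qed.

Definition sig_ctx (P Z Q B : sig) : sig := sig_star_exp (sig_sum (sig_sum P Z) Q) B.

Lemma map_add_seq k s n : map (Nat.add k) (seq s n) = seq (k + s) n.
Proof.
  revert s; induction n as [|n IH]; intros s; simpl; auto.
  rewrite IH; do 2 f_equal; lia.
Qed.

Lemma infl_new_ctx P Z Q B m : m < sz Z ->
  infl_new (sig_ctx P Z Q B) (sz P + m) = map (Nat.add (sz P)) (infl_new Z m).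
Proof.
  intros Hm; unfold infl_new.
  replace (seq 0 (sz P + m)) with (seq 0 (sz P) ++ map (Nat.add (sz P)) (seq 0 m))
    by (rewrite map_add_seq, Nat.add_0_r, seq_app; reflexivity).
  rewrite filter_app, filter_map_swap.
  rewrite (filter_ext_in _ (fun _ => false)), filter_false; simpl.
  - f_equal; apply filter_ext_in; intros a Ha; apply in_seq in Ha.
    unfold sig_ctx; simpl; f_equal; nat_cases; sval_congr.
  - intros a Ha; apply in_seq in Ha; unfold sig_ctx; simpl; nat_cases.
Qed.

Lemma infl_cls_ctx_below P Z Q B m x : m < sz Z -> x < sz P ->
  infl_cls (sig_ctx P Z Q B) (sz P + m) x = (false, x).
Proof. intros; unfold infl_cls; nat_cases; reflexivity. Qed.

Lemma infl_cls_ctx P Z Q B m x : m < sz Z -> sz P <= x ->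
  infl_cls (sig_ctx P Z Q B) (sz P + m) x =
  (fst (infl_cls Z m (x - sz P)), sz P + snd (infl_cls Z m (x - sz P))).
Proof.
  intros Hm Hx; unfold infl_cls; rewrite infl_new_ctx, length_map by auto.
  nat_cases; simpl; try (f_equal; lia).
  replace (x - (sz P + m)) with (x - sz P - m) by lia.
  rewrite (nth_indep _ 0 (sz P + 0)) by (rewrite length_map; lia).
  rewrite map_nth; reflexivity.
Qed.

Lemma infl_ctx P Z Q B m : m < sz Z ->
  sig_eqv (infl (sig_ctx P Z Q B) (sz P + m)) (sig_ctx P (infl Z m) Q B).
Proof.
  intros Hm; split.
  { rewrite infl_sz, infl_new_ctx, length_map by auto; simpl; lia. }
  intros x y Hxy; rewrite infl_sz, infl_new_ctx, length_map in Hxy by auto.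
  rewrite sval_infl.
  destruct (Nat.ltb_spec x (sz P)); destruct (Nat.ltb_spec y (sz P));
    rewrite ?infl_cls_ctx_below, ?infl_cls_ctx by (auto; lia).
  all: unfold sig_ctx, sig_star_exp, sig_sum; cbn [sval sz infl_val fst snd].
  all: rewrite ?sval_infl, ?infl_sz.
  all: try destruct (infl_clsP Z m (x - sz P)); try destruct (infl_clsP Z m (y - sz P)).
  all: cbn [fst snd infl_val]; nat_cases; norm_idx; sval_congr.
Qed.

Lemma infl_new_star_exp Z B : infl_new (sig_star_exp Z B) (sz Z) = seq 0 (sz Z).
Proof.
  unfold infl_new; rewrite (filter_ext_in _ (fun _ => true)), filter_true; auto.
  intros a Ha; apply in_seq in Ha; simpl; nat_cases.
Qed.

Lemma infl_star_exp_dup Z B :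
  sig_eqv (infl (sig_star_exp Z B) (sz Z)) (sig_star_exp (sig_sum Z Z) B).
Proof.
  split.
  { rewrite infl_sz, infl_new_star_exp, length_seq; simpl; lia. }
  intros x y Hxy; rewrite infl_sz, infl_new_star_exp, length_seq in Hxy.
  rewrite sval_infl.
  destruct (infl_clsP (sig_star_exp Z B) (sz Z) x);
    destruct (infl_clsP (sig_star_exp Z B) (sz Z) y);
    rewrite ?infl_new_star_exp, ?length_seq, ?seq_nth in * by lia; subst.
  all: cbn [infl_val]; unfold sig_star_exp, sig_sum; cbn [sval sz]; nat_cases; sval_congr.
Qed.

Lemma embeds_ctx P Q B C Z : embeds C Z -> embeds (sig_ctx P C Q B) (sig_ctx P Z Q B).
Proof.
  intros H; unfold sig_ctx.
  apply embeds_star_exp; [|apply embeds_refl].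
  apply embeds_sum; [|apply embeds_refl].
  apply embeds_sum; [apply embeds_refl | exact H].
Qed.

Lemma sig_step_ctx P Q B C Z :
  sig_step C Z -> sig_step (sig_ctx P C Q B) (sig_ctx P Z Q B).
Proof.
  intros [m [Hm HC]]; exists (sz P + m); split; [simpl; lia|].
  apply (embeds_trans _ _ _ (embeds_ctx P Q B _ _ HC)).
  apply embeds_of_eqv, sig_eqv_sym, infl_ctx, Hm.
Qed.

Lemma sig_le_ctx P Q B C Z : sig_le C Z -> sig_le (sig_ctx P C Q B) (sig_ctx P Z Q B).
Proof.
  induction 1 as [C Z H|C D Z HDZ _ IH].
  - apply sig_le_refl; unfold sig_ctx.
    apply sig_star_exp_eqv; [|apply sig_eqv_refl].
    apply sig_sum_eqv; [|apply sig_eqv_refl].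
    apply sig_sum_eqv; [apply sig_eqv_refl | exact H].
  - apply (sig_le_step _ _ _ (sig_step_ctx P Q B _ _ HDZ) IH).
Qed.

Lemma sig_le_star_exp_bsum (A A' : nat -> sig) B n :
  (forall i, i < n -> sig_le (A i) (A' i)) -> forall Q,
  sig_le (sig_star_exp (sig_sum (sig_bsum A n) Q) B)
         (sig_star_exp (sig_sum (sig_bsum A' n) Q) B).
Proof.
  induction n as [|n IH]; intros HAA' Q; [apply sig_le_refl, sig_eqv_refl|].
  assert (Hshift : forall C D, sig_eqv (sig_ctx C (D n) Q B)
                    (sig_star_exp (sig_sum C (sig_sum (D n) Q)) B)).
  { intros C D; apply sig_star_exp_eqv, sig_eqv_refl; apply sig_sumA. }
  apply (sig_le_trans _ (sig_ctx (sig_bsum A n) (A' n) Q B)).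
  { apply sig_le_ctx, HAA'; lia. }
  apply (sig_le_eqv_l _ _ _ (Hshift _ A')).
  apply (sig_le_eqv_r _ _ _ (IH ltac:(auto) _)), sig_eqv_sym, Hshift.
Qed.

Lemma sig_le_mul_star_exp Y B k : 0 < sz B -> 0 < k ->
  sig_le (sig_star_exp (sig_mul Y k) B) (sig_star_exp Y B).
Proof.
  intros HB; induction k as [|k IH]; intros Hk; [lia|].
  destruct (Nat.eq_dec k 0) as [->|Hk0].
  { apply sig_le_refl, sig_star_exp_eqv, sig_eqv_refl; apply sig_sum0l. }
  apply (sig_le_trans _ (sig_star_exp (sig_mul Y k) B)); [|apply IH; lia].
  apply (sig_le_trans _ (sig_star_exp (sig_sum (sig_mul Y k) (sig_mul Y k)) B)).
  - apply embeds_le, embeds_star_exp, embeds_refl.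
    apply embeds_sum; [apply embeds_refl | apply (embeds_bsum (fun _ => Y) k 0); lia].
  - apply sig_step_le; exists (sz (sig_mul Y k)); split; [simpl; lia|].
    apply embeds_of_eqv, sig_eqv_sym, infl_star_exp_dup.
Qed.

Lemma sig_star_exp_bsum_equiv n (A : nat -> sig) B j : sz B <> 0 -> j < n ->
  (forall i, i < n -> sig_le (A i) (A j)) ->
  sig_equiv (sig_star_exp (sig_bsum A n) B) (sig_star_exp (A j) B).
Proof.
  intros HB Hj Hle; split.
  - apply (sig_le_trans _ (sig_star_exp (sig_mul (A j) n) B)).
    + apply (sig_le_eqv_l _ (sig_star_exp (sig_sum (sig_bsum A n) sig0) B)).
      { apply sig_star_exp_eqv, sig_eqv_refl; apply sig_eqv_sym, sig_sum0r. }
      apply (sig_le_eqv_r _ _ _ (sig_le_star_exp_bsum A (fun _ => A j) B n Hle sig0)).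
      apply sig_star_exp_eqv, sig_eqv_refl; apply sig_sum0r.
    + apply sig_le_mul_star_exp; lia.
  - apply embeds_le, embeds_star_exp, embeds_refl; apply embeds_bsum, Hj.
Qed.

Lemma sig_mul_exp_le A m : sig_le (sig_mul (sig_exp A) m) (sig_exp (sig_sum A sig1)).
Proof.
  apply (sig_le_trans _ (sig_star_exp (sig_mul (sig_exp A) (S m)) sig1)).
  - apply embeds_le, (embeds_trans _ _ _ (embeds_suml _ (sig_exp A))).
    apply embeds_star_expl.
  - apply (sig_le_eqv_r _ (sig_star_exp (sig_exp A) sig1)).
    + apply sig_le_mul_star_exp; simpl; lia.
    + apply sig_eqv_sym, sig_exp_sum1.
Qed.

Theorem lemma8p3 :
  (forall (n : nat) (A : nat -> sig) (B : sig) (j : nat),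
     (forall i, (i < n)%nat -> in_SS (A i)) ->
     in_SS B -> sz B <> 0%nat ->
     (j < n)%nat ->
     (forall i, (i < n)%nat -> sig_le (A i) (A j)) ->
     sig_equiv (sig_star_exp (sig_bsum A n) B) (sig_star_exp (A j) B))
  /\
  (forall A : sig, in_SS A ->
     forall m : nat, sig_le (sig_mul (sig_exp A) m) (sig_exp (sig_sum A sig1))).
Proof.
  split.
  - intros n A B j _ _ HB Hj Hle; apply sig_star_exp_bsum_equiv; auto.
  - intros A _ m; apply sig_mul_exp_le.
Qed.
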